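(* Let $\Pi_1=\{w\in\mathbb C^2:\operatorname{Im}(w_1+w_2)=0\}$ and $\Pi_2=\{w\in\mathbb C^2:\operatorname{Im}(w_1-w_2)=0\}$, and let $F(w_1,w_2)=(w_1,w_2^2)$. Then $F^{-1}(\Gamma)=\Pi_1\cup\Pi_2$ where $\Gamma=\{\operatorname{Im}(z_1+\sqrt{z_2})=0\}\cup\{\operatorname{Im}(z_1-\sqrt{z_2})=0\}$, and every neighbourhood of $0$ in $\mathbb C^2$ contains a neighbourhood of $0$ that is filled by a continuous family of holomorphic discs with boundaries in $\Pi_1\cup\Pi_2$, contracting to $0$.
   Context: A holomorphic disc is a map from the closed unit disc continuous up to the boundary and holomorphic in the interior; its boundary is the image of the unit circle. *)

From Stdlib Require Import Reals Lra.
Open Scope R_scope.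

Definition Cx : Type := (R * R)%type.
Definition Re (z : Cx) : R := fst z.
Definition Im (z : Cx) : R := snd z.
Definition C0 : Cx := (0, 0).
Definition Cadd (z w : Cx) : Cx := (fst z + fst w, snd z + snd w).
Definition Copp (z : Cx) : Cx := (- fst z, - snd z).
Definition Csub (z w : Cx) : Cx := Cadd z (Copp w).
Definition Cmul (z w : Cx) : Cx :=
  (fst z * fst w - snd z * snd w, fst z * snd w + snd z * fst w).
Definition Cnorm (z : Cx) : R := sqrt (fst z * fst z + snd z * snd z).

Definition C2 : Type := (Cx * Cx)%type.
Definition C2zero : C2 := (C0, C0).
Definition C2norm (w : C2) : R :=
  sqrt (Cnorm (fst w) * Cnorm (fst w) + Cnorm (snd w) * Cnorm (snd w)).
Definition C2dist (w v : C2) : R :=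
  C2norm (Csub (fst w) (fst v), Csub (snd w) (snd v)).

Definition nbhd0 (S : C2 -> Prop) : Prop :=
  exists r, 0 < r /\ forall w, C2norm w < r -> S w.

Definition Pi1 (w : C2) : Prop := Im (Cadd (fst w) (snd w)) = 0.
Definition Pi2 (w : C2) : Prop := Im (Csub (fst w) (snd w)) = 0.
Definition F (w : C2) : C2 := (fst w, Cmul (snd w) (snd w)).
(* Gamma = {Im(z1 + sqrt z2) = 0} U {Im(z1 - sqrt z2) = 0}: the union over
   both signs means: for one of the two square roots s of z2, Im(z1 + s) = 0. *)
Definition Gamma (z : C2) : Prop :=
  exists s : Cx, Cmul s s = snd z /\ Im (Cadd (fst z) s) = 0.

Definition C_differentiable_at (f : Cx -> Cx) (z : Cx) : Prop :=
  exists L : Cx, forall eps, 0 < eps -> exists delta, 0 < delta /\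
    forall h : Cx, 0 < Cnorm h < delta ->
      Cnorm (Csub (Csub (f (Cadd z h)) (f z)) (Cmul L h)) <= eps * Cnorm h.

Definition closed_disc (z : Cx) : Prop := Cnorm z <= 1.
Definition open_disc (z : Cx) : Prop := Cnorm z < 1.
Definition unit_circle (z : Cx) : Prop := Cnorm z = 1.

Definition holomorphic_disc (f : Cx -> C2) : Prop :=
  (forall z, closed_disc z -> forall eps, 0 < eps -> exists delta, 0 < delta /\
     forall z', closed_disc z' -> Cnorm (Csub z' z) < delta ->
       C2dist (f z') (f z) < eps) /\
  (forall z, open_disc z ->
     C_differentiable_at (fun u => fst (f u)) z /\
     C_differentiable_at (fun u => snd (f u)) z).

(* parameter spaces: subsets of R^m, points of R^m as nat -> R
   (only the first m coordinates matter), with the max distance *)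
Fixpoint distRm (m : nat) (s t : nat -> R) : R :=
  match m with
  | O => 0
  | S k => Rmax (Rabs (s k - t k)) (distRm k s t)
  end.
Definition eqRm (m : nat) (s t : nat -> R) : Prop := forall i, (i < m)%nat -> s i = t i.

Definition family_continuous (m : nat) (P : (nat -> R) -> Prop)
  (Phi : (nat -> R) -> Cx -> C2) : Prop :=
  forall t z, P t -> closed_disc z -> forall eps, 0 < eps -> exists delta, 0 < delta /\
    forall t' z', P t' -> closed_disc z' -> distRm m t' t < delta ->
      Cnorm (Csub z' z) < delta -> C2dist (Phi t' z') (Phi t z) < eps.

Definition path_in (m : nat) (P : (nat -> R) -> Prop) (a b : nat -> R) : Prop :=
  exists g : R -> (nat -> R),
    eqRm m (g 0) a /\ eqRm m (g 1) b /\
    (forall s, 0 <= s <= 1 -> P (g s)) /\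
    (forall s, 0 <= s <= 1 -> forall eps, 0 < eps -> exists delta, 0 < delta /\
       forall s', 0 <= s' <= 1 -> Rabs (s' - s) < delta -> distRm m (g s') (g s) < eps).

(* In the coordinates e1 = w1 + w2, e2 = w1 - w2 the sets Pi1 and Pi2 are
   {Im e1 = 0} and {Im e2 = 0}, and F^-1(Gamma) = Pi1 ∪ Pi2 because s^2 = w2^2
   forces s = ±w2.  Given holomorphic discs g1, g2 with g1(0) = g2(0) = i and
   Im g1 = 0 or Im g2 = 0 at every boundary point, the discs
   e1 = a1 + b1 g1, e2 = a2 + b2 g2 with small real a, b have boundaries in
   Pi1 ∪ Pi2, their centres a_k + i b_k cover a neighbourhood of 0, and
   shrinking (a, b) to 0 contracts them to the constant disc 0.  Such g1, g2
   are rational in √(1 - z) and √(1 + z), since (1 - z)/(1 + z) is purely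
   imaginary on the unit circle. *)

From Stdlib Require Import Reals Lra Psatz Lia.
From Coquelicot Require Import Coquelicot.
Open Scope R_scope.

Lemma Cmod_sqr (w : C) : Cmod w * Cmod w = fst w * fst w + snd w * snd w.
Proof. unfold Cmod; rewrite sqrt_sqrt; nra. Qed.

Lemma Cmod_fst_le (w : C) : Rabs (fst w) <= Cmod w.
Proof. exact (re_le_Cmod w). Qed.

Lemma Cnorm_Cmod (z : C) : Cnorm z = Cmod z.
Proof. unfold Cnorm, Cmod; f_equal; simpl; ring. Qed.

Lemma Cmod_sub_sym (a b : C) : Cmod (a - b)%C = Cmod (b - a)%C.
Proof. replace (a - b)%C with (- (b - a))%C by ring; apply Cmod_opp. Qed.

Lemma Cmod_le_compat (a b : C) :
  fst a * fst a + snd a * snd a <= fst b * fst b + snd b * snd b -> Cmod a <= Cmod b.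
Proof. intros H; apply sqrt_le_1_alt; simpl; lra. Qed.

(* The branch with nonnegative real part; it is continuous off the negative
   real axis, in particular on the closed right half-plane. *)
Definition csqrt (w : C) : C :=
  (sqrt ((Cmod w + fst w) / 2),
   (if Rle_dec 0 (snd w) then 1 else -1) * sqrt ((Cmod w - fst w) / 2)).

Lemma csqrt_spec (w : C) :
  let s := csqrt w in
  fst s * fst s - snd s * snd s = fst w /\ 2 * fst s * snd s = snd w /\
  0 <= fst s /\ fst s * fst s + snd s * snd s = Cmod w /\
  (0 <= fst w -> Rabs (snd s) <= fst s).
Proof.
  destruct w as [x y]; unfold csqrt; simpl.
  pose proof (Cmod_fst_le (x, y)) as Hx; simpl in Hx; apply Rabs_le_between in Hx.
  pose proof (Cmod_sqr (x, y)) as Hr; simpl in Hr.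
  set (r := Cmod (x, y)) in *.
  assert (Ep : sqrt ((r + x) / 2) * sqrt ((r + x) / 2) = (r + x) / 2)
    by (apply sqrt_sqrt; lra).
  assert (Eq : sqrt ((r - x) / 2) * sqrt ((r - x) / 2) = (r - x) / 2)
    by (apply sqrt_sqrt; lra).
  assert (q_le_p : 0 <= x -> sqrt ((r - x) / 2) <= sqrt ((r + x) / 2))
    by (intros; apply sqrt_le_1_alt; lra).
  pose proof (sqrt_pos ((r + x) / 2)); pose proof (sqrt_pos ((r - x) / 2)).
  set (p := sqrt ((r + x) / 2)) in *; set (q := sqrt ((r - x) / 2)) in *.
  assert (Hpq : p * q = Rabs y / 2).
  { assert (Hsq : p * q * (p * q) = Rabs y / 2 * (Rabs y / 2)).
    { replace (p * q * (p * q)) with ((p * p) * (q * q)) by ring; rewrite Ep, Eq.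
      replace (Rabs y / 2 * (Rabs y / 2)) with (Rabs y * Rabs y / 4) by field.
      rewrite <- Rabs_mult, Rabs_right by nra; nra. }
    apply Rsqr_inj; [nra | pose proof (Rabs_pos y); lra | exact Hsq]. }
  destruct (Rle_dec 0 y) as [Hy | Hy].
  - rewrite Rabs_right in Hpq by lra.
    repeat split; try nra.
    intros Hx0; specialize (q_le_p Hx0); rewrite Rabs_right by nra; nra.
  - rewrite Rabs_left in Hpq by lra.
    repeat split; try nra.
    intros Hx0; specialize (q_le_p Hx0); rewrite Rabs_left1 by nra; nra.
Qed.

Arguments csqrt : simpl never.

Local Open Scope C_scope.

Lemma csqrt_sqr (w : C) : csqrt w * csqrt w = w.
Proof.
  destruct (csqrt_spec w) as [E1 [E2 _]].
  destruct w as [x y]; unfold Cmult; simpl in *; f_equal; lra.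
Qed.

Lemma csqrt_diff (w w' : C) : (csqrt w' - csqrt w) * (csqrt w' + csqrt w) = w' - w.
Proof.
  transitivity (csqrt w' * csqrt w' - csqrt w * csqrt w); [ring |].
  now rewrite !csqrt_sqr.
Qed.

Lemma csqrt_lipschitz (w w' : C) :
  (0 < fst (csqrt w))%R -> (Cmod (csqrt w' - csqrt w) * fst (csqrt w) <= Cmod (w' - w))%R.
Proof.
  intros H; rewrite <- (csqrt_diff w w'), Cmod_mult.
  apply Rmult_le_compat_l; [apply Cmod_ge_0 |].
  destruct (csqrt_spec w') as [_ [_ [H' _]]].
  pose proof (Cmod_fst_le (csqrt w' + csqrt w)) as Hre.
  change (fst (csqrt w' + csqrt w)) with (fst (csqrt w') + fst (csqrt w))%R in Hre.
  pose proof (Rle_abs (fst (csqrt w') + fst (csqrt w))). lra.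
Qed.

(* On the right half-plane the two roots lie in one quarter plane around the
   positive axis, so |√w' + √w| ≥ |√w' - √w|. *)
Lemma csqrt_holder (w w' : C) : (0 <= fst w)%R -> (0 <= fst w')%R ->
  (Cmod (csqrt w' - csqrt w) * Cmod (csqrt w' - csqrt w) <= Cmod (w' - w))%R.
Proof.
  intros Hw Hw'; rewrite <- (csqrt_diff w w'), Cmod_mult.
  apply Rmult_le_compat_l; [apply Cmod_ge_0 |].
  apply Cmod_le_compat.
  destruct (csqrt_spec w) as [_ [_ [A1 [_ A2]]]].
  destruct (csqrt_spec w') as [_ [_ [B1 [_ B2]]]].
  specialize (A2 Hw); specialize (B2 Hw').
  destruct (csqrt w) as [s1 s2]; destruct (csqrt w') as [t1 t2]; simpl in *.
  apply Rabs_le_between in A2; apply Rabs_le_between in B2.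
  assert (0 <= t1 * s1 + t2 * s2) by nra.
  nra.
Qed.

Definition continuous_in (D : C -> Prop) (f : C -> C) (z : C) : Prop :=
  forall eps, (0 < eps)%R -> exists d, (0 < d)%R /\
    forall z', D z' -> (Cmod (z' - z) < d)%R -> (Cmod (f z' - f z) < eps)%R.

Lemma continuous_in_ext D f g z :
  (forall x, f x = g x) -> continuous_in D f z -> continuous_in D g z.
Proof.
  intros E Hf eps He; destruct (Hf eps He) as [d [Hd H]].
  exists d; split; [exact Hd |]; intros z'; rewrite <- !E; apply H.
Qed.

Lemma continuous_in_const D c z : continuous_in D (fun _ => c) z.
Proof.
  intros eps He; exists 1%R; split; [lra |]; intros.
  replace (c - c) with (RtoC 0) by ring; rewrite Cmod_0; lra.
Qed.

Lemma continuous_in_add D f g z :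
  continuous_in D f z -> continuous_in D g z -> continuous_in D (fun x => f x + g x) z.
Proof.
  intros Hf Hg eps He.
  destruct (Hf (eps / 2)%R) as [d1 [Hd1 H1]]; [lra |].
  destruct (Hg (eps / 2)%R) as [d2 [Hd2 H2]]; [lra |].
  exists (Rmin d1 d2); split; [now apply Rmin_pos |].
  intros z' Dz Hz; pose proof (Rmin_l d1 d2); pose proof (Rmin_r d1 d2).
  replace (f z' + g z' - (f z + g z)) with ((f z' - f z) + (g z' - g z)) by ring.
  eapply Rle_lt_trans; [apply Cmod_triangle |].
  specialize (H1 z' Dz ltac:(lra)); specialize (H2 z' Dz ltac:(lra)); lra.
Qed.

Lemma continuous_in_mul D f g z :
  continuous_in D f z -> continuous_in D g z -> continuous_in D (fun x => f x * g x) z.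
Proof.
  intros Hf Hg eps He.
  set (Mf := (Cmod (f z) + 1)%R); set (Mg := (Cmod (g z) + 1)%R).
  pose proof (Cmod_ge_0 (f z)) as Nf; pose proof (Cmod_ge_0 (g z)) as Ng.
  assert (Mf_pos : (0 < Mf)%R) by (unfold Mf; lra).
  assert (Mg_pos : (0 < Mg)%R) by (unfold Mg; lra).
  destruct (Hf (eps / (2 * Mg))%R) as [d1 [Hd1 H1]].
  { apply Rdiv_lt_0_compat; lra. }
  destruct (Hg (Rmin 1 (eps / (2 * Mf)))%R) as [d2 [Hd2 H2]].
  { apply Rmin_pos; [lra | apply Rdiv_lt_0_compat; lra]. }
  exists (Rmin d1 d2); split; [now apply Rmin_pos |].
  intros z' Dz Hz; pose proof (Rmin_l d1 d2); pose proof (Rmin_r d1 d2).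
  specialize (H1 z' Dz ltac:(lra)); specialize (H2 z' Dz ltac:(lra)).
  pose proof (Rmin_l 1 (eps / (2 * Mf))); pose proof (Rmin_r 1 (eps / (2 * Mf))).
  assert (Bg : (Cmod (g z') <= Mg)%R).
  { replace (g z') with ((g z' - g z) + g z) by ring.
    eapply Rle_trans; [apply Cmod_triangle | unfold Mg; lra]. }
  replace (f z' * g z' - f z * g z) with ((f z' - f z) * g z' + f z * (g z' - g z))
    by ring.
  eapply Rle_lt_trans; [apply Cmod_triangle |]; rewrite !Cmod_mult.
  assert (E1 : (Cmod (f z' - f z) * Cmod (g z') < eps / (2 * Mg) * Mg)%R).
  { pose proof (Cmod_ge_0 (f z' - f z)); pose proof (Cmod_ge_0 (g z')); nra. }
  assert (E2 : (Cmod (f z) * Cmod (g z' - g z) <= Mf * (eps / (2 * Mf)))%R).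
  { apply Rmult_le_compat; try apply Cmod_ge_0; unfold Mf in *; lra. }
  replace (eps / (2 * Mg) * Mg)%R with (eps / 2)%R in E1 by (field; lra).
  replace (Mf * (eps / (2 * Mf)))%R with (eps / 2)%R in E2 by (field; lra).
  lra.
Qed.

Lemma continuous_in_inv D f z :
  continuous_in D f z -> f z <> 0 -> continuous_in D (fun x => / f x) z.
Proof.
  intros Hf Hz eps He.
  set (a := Cmod (f z)); assert (Ha : (0 < a)%R) by now apply Cmod_gt_0.
  destruct (Hf (Rmin (a / 2) (eps * a * a / 2))%R) as [d [Hd H]].
  { apply Rmin_pos; [lra | apply Rdiv_lt_0_compat; [| lra]].
    repeat apply Rmult_lt_0_compat; lra. }
  exists d; split; [exact Hd |]; intros z' Dz Hz'; specialize (H z' Dz Hz').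
  pose proof (Rmin_l (a / 2) (eps * a * a / 2)) as Ml.
  pose proof (Rmin_r (a / 2) (eps * a * a / 2)) as Mr.
  set (e := Cmod (f z' - f z)) in *; set (b := Cmod (f z')).
  assert (Hb : (a / 2 <= b)%R).
  { assert (a <= e + b)%R.
    { unfold a, e, b; rewrite Cmod_sub_sym.
      replace (f z) with ((f z - f z') + f z') at 1 by ring; apply Cmod_triangle. }
    lra. }
  assert (Hnz : f z' <> 0) by (apply Cmod_gt_0; fold b; lra).
  replace (/ f z' - / f z) with ((f z - f z') * / f z' * / f z) by (field; auto).
  rewrite !Cmod_mult, !Cmod_inv by auto; rewrite Cmod_sub_sym; fold a b e.
  apply (Rmult_lt_reg_r (b * a)); [nra |].
  replace (e * / b * / a * (b * a))%R with e by (field; lra).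
  assert (0 <= eps * a * (b - a / 2))%R by (apply Rmult_le_pos; [nra | lra]).
  lra.
Qed.

(* Caratheodory's form of complex differentiability: f z' - f z factors as
   phi z' * (z' - z) with phi continuous at z.  It is stable under the
   algebraic operations and square roots without any limit computation. *)
Definition Cderivable (f : C -> C) (z : C) : Prop :=
  exists rho, (0 < rho)%R /\ exists phi, continuous_in (fun _ => True) phi z /\
    forall z', (Cmod (z' - z) < rho)%R -> f z' - f z = phi z' * (z' - z).

Lemma Cderivable_ext f g z : (forall x, f x = g x) -> Cderivable f z -> Cderivable g z.
Proof.
  intros E [rho [Hr [phi [Hc Hs]]]]; exists rho; split; [exact Hr |].
  exists phi; split; [exact Hc |]; intros z'; rewrite <- !E; apply Hs.
Qed.

Lemma Cderivable_continuous D f z : Cderivable f z -> continuous_in D f z.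
Proof.
  intros [rho [Hr [phi [Hc Hs]]]] eps He.
  destruct (Hc 1%R) as [d1 [Hd1 H1]]; [lra |].
  set (M := (Cmod (phi z) + 1)%R).
  assert (HM : (0 < M)%R) by (unfold M; pose proof (Cmod_ge_0 (phi z)); lra).
  exists (Rmin (Rmin rho d1) (eps / M)); split.
  { repeat apply Rmin_pos; auto; apply Rdiv_lt_0_compat; lra. }
  intros z' _ Hz.
  pose proof (Rmin_l (Rmin rho d1) (eps / M)); pose proof (Rmin_r (Rmin rho d1) (eps / M)).
  pose proof (Rmin_l rho d1); pose proof (Rmin_r rho d1).
  rewrite Hs by lra; rewrite Cmod_mult.
  assert (Hp : (Cmod (phi z') <= M)%R).
  { specialize (H1 z' I ltac:(lra)).
    replace (phi z') with ((phi z' - phi z) + phi z) by ring.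
    eapply Rle_trans; [apply Cmod_triangle | unfold M; lra]. }
  pose proof (Cmod_ge_0 (phi z')); pose proof (Cmod_ge_0 (z' - z)).
  replace eps with (M * (eps / M))%R by (field; lra); nra.
Qed.

Lemma Cderivable_const c z : Cderivable (fun _ => c) z.
Proof.
  exists 1%R; split; [lra |]; exists (fun _ => 0); split.
  - apply continuous_in_const.
  - intros; ring.
Qed.

Lemma Cderivable_id z : Cderivable (fun x => x) z.
Proof.
  exists 1%R; split; [lra |]; exists (fun _ => 1); split.
  - apply continuous_in_const.
  - intros; ring.
Qed.

Lemma Cderivable_add f g z :
  Cderivable f z -> Cderivable g z -> Cderivable (fun x => f x + g x) z.
Proof.
  intros [r1 [Hr1 [p1 [C1 S1]]]] [r2 [Hr2 [p2 [C2 S2]]]].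
  exists (Rmin r1 r2); split; [now apply Rmin_pos |].
  exists (fun x => p1 x + p2 x); split; [now apply continuous_in_add |].
  intros z' Hz; pose proof (Rmin_l r1 r2); pose proof (Rmin_r r1 r2).
  replace (f z' + g z' - (f z + g z)) with ((f z' - f z) + (g z' - g z)) by ring.
  rewrite S1, S2 by lra; ring.
Qed.

Lemma Cderivable_mul f g z :
  Cderivable f z -> Cderivable g z -> Cderivable (fun x => f x * g x) z.
Proof.
  intros Hf Hg; pose proof (Cderivable_continuous (fun _ => True) g z Hg) as Cg.
  destruct Hf as [r1 [Hr1 [p1 [C1 S1]]]]; destruct Hg as [r2 [Hr2 [p2 [C2 S2]]]].
  exists (Rmin r1 r2); split; [now apply Rmin_pos |].
  exists (fun x => p1 x * g x + f z * p2 x); split.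
  { apply continuous_in_add; apply continuous_in_mul; auto; apply continuous_in_const. }
  intros z' Hz; pose proof (Rmin_l r1 r2); pose proof (Rmin_r r1 r2).
  replace (f z' * g z' - f z * g z) with ((f z' - f z) * g z' + f z * (g z' - g z))
    by ring.
  rewrite S1, S2 by lra; ring.
Qed.

Lemma Cderivable_scal_add a b f z :
  Cderivable f z -> Cderivable (fun x => a + b * f x) z.
Proof.
  intros Hf; apply Cderivable_add; [apply Cderivable_const |].
  apply Cderivable_mul; [apply Cderivable_const | exact Hf].
Qed.

Lemma Cderivable_inv f z : Cderivable f z -> f z <> 0 -> Cderivable (fun x => / f x) z.
Proof.
  intros Hf Hz; pose proof (Cderivable_continuous (fun _ => True) f z Hf) as Cf.
  destruct Hf as [r1 [Hr1 [p1 [C1 S1]]]].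
  set (a := Cmod (f z)); assert (Ha : (0 < a)%R) by now apply Cmod_gt_0.
  destruct (Cf (a / 2)%R) as [d [Hd Hc]]; [lra |].
  exists (Rmin r1 d); split; [now apply Rmin_pos |].
  exists (fun x => -1 * p1 x * / (f x * f z)); split.
  { apply continuous_in_mul; [apply continuous_in_mul; auto; apply continuous_in_const |].
    apply continuous_in_inv; [| now apply Cmult_neq_0].
    apply continuous_in_mul; auto; apply continuous_in_const. }
  intros z' Hz'; pose proof (Rmin_l r1 d); pose proof (Rmin_r r1 d).
  assert (Hnz : f z' <> 0).
  { intros Z; specialize (Hc z' I ltac:(lra)); rewrite Z in Hc.
    replace (0 - f z) with (- f z) in Hc by ring; rewrite Cmod_opp in Hc; fold a in Hc; lra. }
  replace (/ f z' - / f z) with (-1 * (f z' - f z) * / (f z' * f z)) by (field; auto).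
  rewrite S1 by lra; field; auto.
Qed.

Lemma csqrt_re_pos (w : C) : w <> 0 -> (0 <= fst w)%R -> (0 < fst (csqrt w))%R.
Proof.
  intros Hw Hx; unfold csqrt; simpl; apply sqrt_lt_R0.
  assert (0 < Cmod w)%R by now apply Cmod_gt_0.
  lra.
Qed.

(* The slope of the square root at g z is read off from
   √w' - √w = (w' - w) / (√w' + √w), whose denominator has positive real part. *)
Lemma Cderivable_csqrt g z :
  Cderivable g z -> g z <> 0 -> (0 <= fst (g z))%R -> Cderivable (fun x => csqrt (g x)) z.
Proof.
  intros Hg Hz Hx; pose proof (Cderivable_continuous (fun _ => True) g z Hg) as Cg.
  pose proof (csqrt_re_pos _ Hz Hx) as Hp.
  assert (Cs : continuous_in (fun _ => True) (fun x => csqrt (g x)) z).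
  { intros eps He; destruct (Cg (eps * fst (csqrt (g z)))%R) as [d [Hd Hc]]; [nra |].
    exists d; split; [exact Hd |]; intros z' _ Hz'; specialize (Hc z' I Hz').
    pose proof (csqrt_lipschitz (g z) (g z') Hp).
    apply (Rmult_lt_reg_r (fst (csqrt (g z)))); [exact Hp | lra]. }
  assert (NZ : forall w, csqrt w + csqrt (g z) <> 0).
  { intros w Z.
    assert (Hre : fst (csqrt w + csqrt (g z)) = 0%R) by (rewrite Z; reflexivity).
    change (fst (csqrt w + csqrt (g z))) with (fst (csqrt w) + fst (csqrt (g z)))%R in Hre.
    destruct (csqrt_spec w) as [_ [_ [Hw _]]]; lra. }
  destruct Hg as [r1 [Hr1 [p1 [C1 S1]]]].
  exists r1; split; [exact Hr1 |].
  exists (fun x => p1 x * / (csqrt (g x) + csqrt (g z))); split.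
  { apply continuous_in_mul; [exact C1 |].
    apply continuous_in_inv; [| apply NZ].
    apply continuous_in_add; [exact Cs | apply continuous_in_const]. }
  intros z' Hz'.
  replace (csqrt (g z') - csqrt (g z))
    with ((g z' - g z) * / (csqrt (g z') + csqrt (g z)))
    by (rewrite <- (csqrt_diff (g z) (g z')); field; apply NZ).
  rewrite S1 by exact Hz'; ring.
Qed.

Lemma Cderivable_C_differentiable_at f z : Cderivable f z -> C_differentiable_at f z.
Proof.
  intros [rho [Hr [phi [Hc Hs]]]]; exists (phi z); intros eps He.
  destruct (Hc eps He) as [d [Hd H]].
  exists (Rmin rho d); split; [now apply Rmin_pos |].
  intros h [_ Hh]; rewrite Cnorm_Cmod in Hh.
  pose proof (Rmin_l rho d); pose proof (Rmin_r rho d).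
  assert (Ezh : z + h - z = h) by ring.
  change (Csub (Csub (f (Cadd z h)) (f z)) (Cmul (phi z) h))
    with ((f (z + h) - f z) - phi z * h).
  rewrite Hs by (rewrite Ezh; lra).
  replace (phi (z + h) * (z + h - z) - phi z * h) with ((phi (z + h) - phi z) * h)
    by ring.
  rewrite !Cnorm_Cmod, Cmod_mult; apply Rmult_le_compat_r; [apply Cmod_ge_0 |].
  left; apply H; [exact I | rewrite Ezh; lra].
Qed.

Lemma closed_disc_Cmod (z : C) : closed_disc z <-> (Cmod z <= 1)%R.
Proof. unfold closed_disc; rewrite Cnorm_Cmod; tauto. Qed.

Lemma open_disc_Cmod (z : C) : open_disc z <-> (Cmod z < 1)%R.
Proof. unfold open_disc; rewrite Cnorm_Cmod; tauto. Qed.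

Lemma unit_circle_Cmod (z : C) : unit_circle z <-> Cmod z = 1%R.
Proof. unfold unit_circle; rewrite Cnorm_Cmod; tauto. Qed.

Lemma closed_disc_re_nonneg (z : C) :
  closed_disc z -> (0 <= fst (1 - z)%C)%R /\ (0 <= fst (1 + z)%C)%R.
Proof.
  rewrite closed_disc_Cmod; intros H; pose proof (Cmod_fst_le z) as Hx.
  apply Rabs_le_between in Hx; destruct z as [x y]; simpl in *; lra.
Qed.

Lemma Cmod_1m_add_1p (z : C) : (2 <= Cmod (1 - z)%C + Cmod (1 + z)%C)%R.
Proof.
  pose proof (Cmod_triangle (1 - z) (1 + z)) as H.
  replace (1 - z + (1 + z)) with (RtoC 2) in H by ring.
  rewrite Cmod_R, Rabs_right in H by lra; exact H.
Qed.

Definition sqrt_1m (z : C) : C := csqrt (1 - z).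
Definition sqrt_1p (z : C) : C := csqrt (1 + z).
Definition ratio (c z : C) : C := sqrt_1p z / (sqrt_1p z + c * sqrt_1m z).

(* On the unit circle √(1 - z)/√(1 + z) has argument ±π/4, so one of the two
   ratios below is real there; the affine maps normalise h1 0 = h2 0 = i. *)
Definition h1 (z : C) : C := 5 * ratio (1 - Ci) z - 2.
Definition h2 (z : C) : C := 2 - 5 * ratio (1 + Ci) z.

Lemma quarter_plane_den_sqr (a b : C) :
  (Rabs (snd a) <= fst a)%R -> (Rabs (snd b) <= fst b)%R ->
  (2 <= Cmod a * Cmod a + Cmod b * Cmod b)%R ->
  (1 / 2 <= Cmod (b + (1 - Ci) * a) * Cmod (b + (1 - Ci) * a))%R.
Proof.
  rewrite !Cmod_sqr; destruct a as [a1 a2], b as [b1 b2]; simpl.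
  intros Ha Hb S; apply Rabs_le_between in Ha; apply Rabs_le_between in Hb.
  set (u := (b1 + a1 + a2)%R); set (v := (b2 + a2 - a1)%R).
  match goal with |- (_ <= ?g)%R => replace g with (u * u + v * v)%R by (unfold u, v; ring) end.
  assert (b1 * b1 + b2 * b2 <= 2 * (u * u))%R by (unfold u; nra).
  assert ((a1 + a2) * (a1 + a2) <= u * u)%R by (unfold u; nra).
  assert ((a1 - a2) * (a1 - a2) <= (u - v) * (u - v))%R by (unfold u, v; nra).
  nra.
Qed.

Lemma Cmod_csqrt_sqr (w : C) : (Cmod (csqrt w) * Cmod (csqrt w))%R = Cmod w.
Proof. rewrite Cmod_sqr; apply (csqrt_spec w). Qed.

Lemma csqrt_quarter_plane (w : C) :
  (0 <= fst w)%R -> (Rabs (snd (csqrt w)) <= fst (csqrt w))%R.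
Proof. apply (csqrt_spec w). Qed.

Definition den (c z : C) : C := sqrt_1p z + c * sqrt_1m z.

Lemma den_sqr_ge (c z : C) : c = 1 - Ci \/ c = 1 + Ci -> closed_disc z ->
  (1 / 2 <= Cmod (den c z) * Cmod (den c z))%R.
Proof.
  intros Hc Hz; destruct (closed_disc_re_nonneg z Hz) as [Hm Hp].
  pose proof (csqrt_quarter_plane _ Hm) as Qa; pose proof (csqrt_quarter_plane _ Hp) as Qb.
  assert (S : (2 <= Cmod (sqrt_1m z) * Cmod (sqrt_1m z)
                    + Cmod (sqrt_1p z) * Cmod (sqrt_1p z))%R).
  { unfold sqrt_1m, sqrt_1p; rewrite !Cmod_csqrt_sqr; apply Cmod_1m_add_1p. }
  unfold den; fold (sqrt_1m z) (sqrt_1p z) in Qa, Qb.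
  destruct Hc as [-> | ->]; [now apply quarter_plane_den_sqr |].
  (* conjugation exchanges the two denominators *)
  replace (sqrt_1p z + (1 + Ci) * sqrt_1m z)
    with (Cconj (Cconj (sqrt_1p z) + (1 - Ci) * Cconj (sqrt_1m z))).
  - rewrite Cmod_conj; apply quarter_plane_den_sqr;
      [simpl; rewrite Rabs_Ropp; exact Qa | simpl; rewrite Rabs_Ropp; exact Qb |].
    now rewrite !Cmod_conj.
  - destruct (sqrt_1p z), (sqrt_1m z); unfold Cconj, Ci, Cplus, Cminus, Cmult, Copp; simpl.
    f_equal; ring.
Qed.

Lemma den_neq0 (c z : C) : c = 1 - Ci \/ c = 1 + Ci -> closed_disc z -> den c z <> 0.
Proof.
  intros Hc Hz Z; pose proof (den_sqr_ge c z Hc Hz) as H.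
  rewrite Z, Cmod_0 in H; lra.
Qed.

Lemma Cmod_ratio_le (c z : C) : c = 1 - Ci \/ c = 1 + Ci -> closed_disc z ->
  (Cmod (ratio c z) <= 2)%R.
Proof.
  intros Hc Hz; pose proof (den_sqr_ge c z Hc Hz) as Hd.
  assert (Hb : (Cmod (sqrt_1p z) * Cmod (sqrt_1p z) <= 4 * (1 / 2))%R).
  { unfold sqrt_1p; rewrite Cmod_csqrt_sqr.
    eapply Rle_trans; [apply Cmod_triangle |].
    rewrite Cmod_1; apply closed_disc_Cmod in Hz; lra. }
  unfold ratio; fold (den c z); rewrite Cmod_div by now apply den_neq0.
  pose proof (Cmod_ge_0 (den c z)); pose proof (Cmod_ge_0 (sqrt_1p z)).
  assert (0 < Cmod (den c z))%R by nra.
  apply Rle_div_l; [lra |]; nra.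
Qed.

Lemma Cmod_h_le (z : C) : closed_disc z -> (Cmod (h1 z) <= 12)%R /\ (Cmod (h2 z) <= 12)%R.
Proof.
  intros Hz.
  pose proof (Cmod_ratio_le (1 - Ci) z (or_introl eq_refl) Hz).
  pose proof (Cmod_ratio_le (1 + Ci) z (or_intror eq_refl) Hz).
  unfold h1, h2; split; eapply Rle_trans; try apply Cmod_triangle;
    rewrite ?Cmod_opp, Cmod_mult, !Cmod_R, !Rabs_right; lra.
Qed.

Lemma continuous_in_csqrt D g z : (forall x, D x -> (0 <= fst (g x))%R) ->
  D z -> continuous_in D g z -> continuous_in D (fun x => csqrt (g x)) z.
Proof.
  intros Hre Dz Hg eps He; destruct (Hg (eps * eps)%R) as [d [Hd H]]; [nra |].
  exists d; split; [exact Hd |]; intros z' Dz' Hz'; specialize (H z' Dz' Hz').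
  pose proof (csqrt_holder _ _ (Hre z Dz) (Hre z' Dz')).
  pose proof (Cmod_ge_0 (csqrt (g z') - csqrt (g z))); nra.
Qed.

Lemma continuous_in_affine D a b z : continuous_in D (fun x => a + b * x) z.
Proof.
  apply continuous_in_add; [apply continuous_in_const |].
  apply continuous_in_mul; [apply continuous_in_const |].
  intros eps He; exists eps; split; auto.
Qed.

Lemma continuous_in_sqrt_1m_1p (z : C) : closed_disc z ->
  continuous_in closed_disc sqrt_1m z /\ continuous_in closed_disc sqrt_1p z.
Proof.
  intros Hz; split.
  - apply continuous_in_ext with (fun x => csqrt (1 + -1 * x)).
    { intros x; unfold sqrt_1m; f_equal; ring. }
    apply continuous_in_csqrt; [| exact Hz | apply continuous_in_affine].
    intros x Hx; replace (1 + -1 * x) with (1 - x) by ring; exact (proj1 (closed_disc_re_nonneg x Hx)).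
  - apply continuous_in_ext with (fun x => csqrt (1 + 1 * x)).
    { intros x; unfold sqrt_1p; f_equal; ring. }
    apply continuous_in_csqrt; [| exact Hz | apply continuous_in_affine].
    intros x Hx; replace (1 + 1 * x) with (1 + x) by ring; exact (proj2 (closed_disc_re_nonneg x Hx)).
Qed.

Lemma continuous_in_ratio (c z : C) : c = 1 - Ci \/ c = 1 + Ci -> closed_disc z ->
  continuous_in closed_disc (ratio c) z.
Proof.
  intros Hc Hz; destruct (continuous_in_sqrt_1m_1p z Hz) as [Cm Cp].
  apply continuous_in_mul; [exact Cp |].
  apply continuous_in_inv; [| now apply den_neq0].
  apply continuous_in_add; [exact Cp |].
  apply continuous_in_mul; [apply continuous_in_const | exact Cm].
Qed.

Lemma continuous_in_h (z : C) : closed_disc z ->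
  continuous_in closed_disc h1 z /\ continuous_in closed_disc h2 z.
Proof.
  intros Hz; split.
  - apply continuous_in_ext with (fun x => -2 + 5 * ratio (1 - Ci) x).
    { intros x; unfold h1; ring. }
    apply continuous_in_add; [apply continuous_in_const |].
    apply continuous_in_mul; [apply continuous_in_const |].
    apply continuous_in_ratio; [left; reflexivity | exact Hz].
  - apply continuous_in_ext with (fun x => 2 + -5 * ratio (1 + Ci) x).
    { intros x; unfold h2; ring. }
    apply continuous_in_add; [apply continuous_in_const |].
    apply continuous_in_mul; [apply continuous_in_const |].
    apply continuous_in_ratio; [right; reflexivity | exact Hz].
Qed.

Lemma Cderivable_sqrt_1m_1p (z : C) : open_disc z -> Cderivable sqrt_1m z /\ Cderivable sqrt_1p z.
Proof.
  rewrite open_disc_Cmod; intros Hz.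
  assert (Hd : closed_disc z) by (apply closed_disc_Cmod; lra).
  destruct (closed_disc_re_nonneg z Hd) as [Hm Hp].
  split.
  - apply Cderivable_ext with (fun x => csqrt (1 + -1 * x)).
    { intros x; unfold sqrt_1m; f_equal; ring. }
    apply Cderivable_csqrt; [apply Cderivable_scal_add, Cderivable_id | |].
    + intros Z; apply (f_equal Cmod) in Z; rewrite Cmod_0 in Z.
      pose proof (Cmod_triangle (1 + -1 * z) z) as T.
      replace (1 + -1 * z + z) with (RtoC 1) in T by ring; rewrite Cmod_1 in T; lra.
    + now replace (1 + -1 * z) with (1 - z) by ring.
  - apply Cderivable_ext with (fun x => csqrt (1 + 1 * x)).
    { intros x; unfold sqrt_1p; f_equal; ring. }
    apply Cderivable_csqrt; [apply Cderivable_scal_add, Cderivable_id | |].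
    + intros Z; apply (f_equal Cmod) in Z; rewrite Cmod_0 in Z.
      pose proof (Cmod_triangle (1 + 1 * z) (- z)) as T.
      replace (1 + 1 * z + - z) with (RtoC 1) in T by ring; rewrite Cmod_opp, Cmod_1 in T; lra.
    + now replace (1 + 1 * z) with (1 + z) by ring.
Qed.

Lemma Cderivable_h (z : C) : open_disc z -> Cderivable h1 z /\ Cderivable h2 z.
Proof.
  intros Hz; destruct (Cderivable_sqrt_1m_1p z Hz) as [Dm Dp].
  assert (Hd : closed_disc z).
  { apply closed_disc_Cmod; apply open_disc_Cmod in Hz; lra. }
  assert (Dr : forall c, c = 1 - Ci \/ c = 1 + Ci -> Cderivable (ratio c) z).
  { intros c Hc; apply Cderivable_mul; [exact Dp |].
    apply Cderivable_inv; [| now apply den_neq0].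
    apply Cderivable_add; [exact Dp |].
    apply Cderivable_mul; [apply Cderivable_const | exact Dm]. }
  split.
  - apply Cderivable_ext with (fun x => -2 + 5 * ratio (1 - Ci) x).
    { intros x; unfold h1; ring. }
    apply Cderivable_scal_add, Dr; now left.
  - apply Cderivable_ext with (fun x => 2 + -5 * ratio (1 + Ci) x).
    { intros x; unfold h2; ring. }
    apply Cderivable_scal_add, Dr; now right.
Qed.

Lemma snd_Cdiv (b d : C) :
  snd (b / d) = ((snd b * fst d - fst b * snd d) / (fst d ^ 2 + snd d ^ 2))%R.
Proof. destruct b as [b1 b2], d as [d1 d2]; unfold Cdiv, Cmult, Cinv; simpl; unfold Rdiv; ring. Qed.

(* With p + i q = √(1 - z)·conj √(1 + z), the numerators of the imaginary parts
   of the two ratios are p - q and -(p + q), while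
   p^2 - q^2 = Re ((1 - z)·conj (1 + z)) = 1 - |z|^2. *)
Lemma ratio_real_on_circle (z : C) : unit_circle z ->
  snd (ratio (1 - Ci) z) = 0%R \/ snd (ratio (1 + Ci) z) = 0%R.
Proof.
  rewrite unit_circle_Cmod; intros Hz.
  destruct (csqrt_spec (1 - z)) as [Ea1 [Ea2 _]].
  destruct (csqrt_spec (1 + z)) as [Eb1 [Eb2 _]].
  pose proof (Cmod_sqr z) as Mz; rewrite Hz in Mz.
  unfold ratio; rewrite !snd_Cdiv; unfold sqrt_1m, sqrt_1p in *.
  destruct (csqrt (1 - z)) as [a1 a2], (csqrt (1 + z)) as [b1 b2].
  destruct z as [x y]; unfold Ci; simpl in *.
  set (p := (a1 * b1 + a2 * b2)%R); set (q := (a2 * b1 - a1 * b2)%R).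
  assert (PQ : ((p - q) * (p + q) = 0)%R).
  { replace ((p - q) * (p + q))%R
      with ((b1 * b1 - b2 * b2) * (a1 * a1 - a2 * a2) + (2 * b1 * b2) * (2 * a1 * a2))%R
      by (unfold p, q; ring).
    rewrite Ea1, Ea2, Eb1, Eb2; nra. }
  apply Rmult_integral in PQ; destruct PQ as [P | P]; [left | right];
    match goal with |- (?N / _)%R = 0%R => replace N with 0%R by (unfold p, q in P; nra) end;
    unfold Rdiv; ring.
Qed.

Lemma h_real_on_circle (z : C) : unit_circle z -> snd (h1 z) = 0%R \/ snd (h2 z) = 0%R.
Proof.
  intros Hz; unfold h1, h2.
  destruct (ratio_real_on_circle z Hz) as [E | E]; [left | right];
    destruct (ratio _ z) as [u v]; simpl in *; rewrite E; ring.
Qed.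

Lemma csqrt_1 : csqrt 1 = 1.
Proof.
  unfold csqrt; rewrite Cmod_1; simpl.
  replace ((1 + 1) / 2)%R with 1%R by field; replace ((1 - 1) / 2)%R with 0%R by field.
  rewrite sqrt_1, sqrt_0; unfold RtoC; f_equal; ring.
Qed.

Lemma h_at_0 : h1 0 = Ci /\ h2 0 = Ci.
Proof.
  unfold h1, h2, ratio, sqrt_1m, sqrt_1p.
  replace (1 - 0) with (RtoC 1) by ring; replace (1 + 0) with (RtoC 1) by ring.
  rewrite csqrt_1; unfold Ci, Cdiv, RtoC, Cplus, Cminus, Copp, Cmult, Cinv; simpl.
  split; apply injective_projections; simpl; field.
Qed.

Lemma Cmult_integral (a b : C) : a * b = 0 -> a = 0 \/ b = 0.
Proof.
  intros H; assert (Hm : (Cmod a * Cmod b = 0)%R) by (rewrite <- Cmod_mult, H; apply Cmod_0).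
  apply Rmult_integral in Hm; destruct Hm; [left | right]; now apply Cmod_eq_0.
Qed.

Lemma preimage_Gamma_F (w : C2) : Gamma (F w) <-> Pi1 w \/ Pi2 w.
Proof.
  destruct w as [w1 w2]; unfold Gamma, F, Pi1, Pi2; simpl; change Cmul with Cmult.
  split.
  - intros [s [E I]]; change C in s, w1, w2.
    assert (Hs : (s - w2) * (s + w2) = 0).
    { transitivity (s * s - w2 * w2); [ring | rewrite E; ring]. }
    assert (Hs' : s = w2 \/ s = - w2).
    { apply Cmult_integral in Hs; destruct Hs as [Hs | Hs]; [left | right].
      - replace s with (s - w2 + w2) by ring; rewrite Hs; ring.
      - replace s with (s + w2 - w2) by ring; rewrite Hs; ring. }
    destruct Hs' as [-> | ->]; [left | right]; exact I.
  - intros [H | H]; [exists w2 | exists (Copp w2)]; split; auto.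
    destruct w2; unfold Copp, Cmult; simpl; f_equal; ring.
Qed.

Local Close Scope C_scope.

Lemma distRm_le m (a b : nat -> R) K : 0 <= K ->
  (forall i, (i < m)%nat -> Rabs (a i - b i) <= K) -> distRm m a b <= K.
Proof.
  intros HK; induction m as [| m IH]; intros H; simpl; [lra |].
  apply Rmax_lub; [apply H; lia | apply IH; intros; apply H; lia].
Qed.

Lemma Rabs_sub_le_distRm m (a b : nat -> R) i : (i < m)%nat -> Rabs (a i - b i) <= distRm m a b.
Proof.
  induction m as [| m IH]; intros H; [lia |]; simpl.
  destruct (Nat.eq_dec i m) as [-> | Hi]; [apply Rmax_l |].
  eapply Rle_trans; [apply IH; lia | apply Rmax_r].
Qed.

Lemma distRm_diag m (a : nat -> R) : distRm m a a = 0.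
Proof.
  apply Rle_antisym.
  - apply distRm_le; [lra | intros; rewrite Rminus_diag, Rabs_R0; lra].
  - destruct m; simpl; [lra |]; pose proof (Rmax_l (Rabs (a m - a m)) (distRm m a a));
      pose proof (Rabs_pos (a m - a m)); lra.
Qed.

Lemma C2norm_ge (w : C2) : Cnorm (fst w) <= C2norm w /\ Cnorm (snd w) <= C2norm w.
Proof.
  unfold C2norm; pose proof (sqrt_pos (fst (fst w) * fst (fst w) + snd (fst w) * snd (fst w))) as P1.
  pose proof (sqrt_pos (fst (snd w) * fst (snd w) + snd (snd w) * snd (snd w))) as P2.
  fold (Cnorm (fst w)) in P1; fold (Cnorm (snd w)) in P2.
  split; rewrite <- (sqrt_square (Cnorm _)) at 1 by auto; apply sqrt_le_1_alt; nra.
Qed.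

Lemma C2norm_le (w : C2) : C2norm w <= Cnorm (fst w) + Cnorm (snd w).
Proof.
  unfold C2norm; pose proof (sqrt_pos (fst (fst w) * fst (fst w) + snd (fst w) * snd (fst w))) as P1.
  pose proof (sqrt_pos (fst (snd w) * fst (snd w) + snd (snd w) * snd (snd w))) as P2.
  fold (Cnorm (fst w)) in P1; fold (Cnorm (snd w)) in P2.
  rewrite <- (sqrt_square (Cnorm (fst w) + Cnorm (snd w))) by lra; apply sqrt_le_1_alt; nra.
Qed.

Definition box (m : nat) (d : R) (t : nat -> R) : Prop :=
  forall i, (i < m)%nat -> Rabs (t i) <= d.

Lemma box_path_to_zero m d t : 0 <= d -> box m d t -> path_in m (box m d) t (fun _ => 0).
Proof.
  intros Hd Ht; exists (fun s i => (1 - s) * t i).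
  split; [intros i _; ring |]; split; [intros i _; ring |]; split.
  - intros s Hs i Hi; rewrite Rabs_mult, (Rabs_right (1 - s)) by lra.
    pose proof (Ht i Hi); pose proof (Rabs_pos (t i)); nra.
  - intros s Hs eps He; exists (eps / (d + 1)); split; [apply Rdiv_lt_0_compat; lra |].
    intros s' Hs' Hss; pose proof (Rabs_pos (s' - s)) as Habs.
    apply Rle_lt_trans with (Rabs (s' - s) * d).
    + apply distRm_le; [nra |]; intros i Hi.
      replace ((1 - s') * t i - (1 - s) * t i) with (- (s' - s) * t i) by ring.
      rewrite Rabs_mult, Rabs_Ropp; pose proof (Ht i Hi); apply Rmult_le_compat_l; lra.
    + apply (Rmult_lt_compat_r (d + 1)) in Hss; [| lra].
      replace (eps / (d + 1) * (d + 1)) with eps in Hss by (field; lra); nra.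
Qed.

Definition disc_param (w : C2) (i : nat) : R :=
  match i with
  | 0 => fst (fst w + snd w)%C
  | 1 => fst (fst w - snd w)%C
  | 2 => snd (fst w + snd w)%C
  | 3 => snd (fst w - snd w)%C
  | _ => 0
  end.

Lemma box_disc_param d w : C2norm w < d / 2 -> box 4 d (disc_param w).
Proof.
  destruct w as [w1 w2]; intros Hw.
  destruct (C2norm_ge (w1, w2)) as [N1 N2]; simpl in N1, N2; rewrite Cnorm_Cmod in N1, N2.
  assert (S : Cmod (w1 + w2)%C < d /\ Cmod (w1 - w2)%C < d).
  { pose proof (Cmod_triangle w1 w2); pose proof (Cmod_triangle w1 (- w2)%C) as T.
    change (w1 + - w2)%C with (w1 - w2)%C in T; rewrite Cmod_opp in T; split; lra. }
  pose proof (Cmod_fst_le (w1 + w2)%C); pose proof (Cmod_fst_le (w1 - w2)%C).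
  pose proof (Rle_trans _ _ _ (Rmax_r _ _) (Rmax_Cmod (w1 + w2)%C)).
  pose proof (Rle_trans _ _ _ (Rmax_r _ _) (Rmax_Cmod (w1 - w2)%C)).
  intros i Hi; destruct i as [| [| [| [| i]]]]; cbn beta iota delta [disc_param fst snd]; lra || lia.
Qed.

Section DiscFamily.

Variables g1 g2 : C -> C.
Variable M : R.
Hypothesis g_bounded :
  forall z, closed_disc z -> Cmod (g1 z) <= M /\ Cmod (g2 z) <= M.
Hypothesis g_continuous : forall z, closed_disc z ->
  continuous_in closed_disc g1 z /\ continuous_in closed_disc g2 z.
Hypothesis g_derivable : forall z, open_disc z -> Cderivable g1 z /\ Cderivable g2 z.
Hypothesis g_real_on_circle : forall z, unit_circle z -> snd (g1 z) = 0 \/ snd (g2 z) = 0.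
Hypothesis g_at_0 : g1 0%C = Ci /\ g2 0%C = Ci.

Definition disc_sum (t : nat -> R) (z : C) : C := (t 0%nat + t 2%nat * g1 z)%C.
Definition disc_diff (t : nat -> R) (z : C) : C := (t 1%nat + t 3%nat * g2 z)%C.
Definition disc_family (t : nat -> R) (z : C) : C2 :=
  ((RtoC (/ 2) * (disc_sum t z + disc_diff t z))%C,
   (RtoC (/ 2) * (disc_sum t z - disc_diff t z))%C).

Lemma disc_family_sum_diff t z :
  Cadd (fst (disc_family t z)) (snd (disc_family t z)) = disc_sum t z /\
  Csub (fst (disc_family t z)) (snd (disc_family t z)) = disc_diff t z.
Proof.
  change Cadd with Cplus; change Csub with Cminus; unfold disc_family; simpl.
  destruct (disc_sum t z), (disc_diff t z).
  unfold RtoC, Cplus, Cminus, Cmult, Copp; simpl.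
  split; apply injective_projections; simpl; field.
Qed.

Lemma disc_family_boundary t z :
  unit_circle z -> Pi1 (disc_family t z) \/ Pi2 (disc_family t z).
Proof.
  intros Hz; unfold Pi1, Pi2; destruct (disc_family_sum_diff t z) as [-> ->].
  unfold Im, disc_sum, disc_diff.
  destruct (g_real_on_circle z Hz) as [E | E]; [left | right];
    destruct (g1 z), (g2 z); simpl in *; rewrite E; ring.
Qed.

Lemma disc_family_zero z : disc_family (fun _ => 0) z = C2zero.
Proof.
  unfold disc_family, disc_sum, disc_diff, C2zero, C0.
  destruct (g1 z), (g2 z); unfold RtoC, Cplus, Cminus, Cmult, Copp; simpl.
  repeat (apply injective_projections; simpl); field.
Qed.

Lemma disc_family_param w : disc_family (disc_param w) 0%C = w.
Proof.
  destruct g_at_0 as [Z1 Z2]; unfold disc_family, disc_sum, disc_diff; rewrite Z1, Z2.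
  destruct w as [[x1 y1] [x2 y2]]; simpl.
  unfold Ci, RtoC, Cplus, Cminus, Cmult, Copp; simpl.
  repeat (apply injective_projections; simpl); field.
Qed.

Lemma bound_ge_1 : 1 <= M.
Proof.
  destruct g_at_0 as [Z _].
  assert (H0 : closed_disc (RtoC 0)) by (apply closed_disc_Cmod; rewrite Cmod_0; lra).
  destruct (g_bounded _ H0) as [B _]; rewrite Z in B.
  replace (Cmod Ci) with 1 in B; [exact B |].
  unfold Cmod, Ci; simpl; replace (0 * (0 * 1) + 1 * (1 * 1)) with 1 by ring; now rewrite sqrt_1.
Qed.

Lemma Cmod_disc_coords_le d t z : box 4 d t -> closed_disc z ->
  Cmod (disc_sum t z) <= (1 + M) * d /\ Cmod (disc_diff t z) <= (1 + M) * d.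
Proof.
  intros Ht Hz; destruct (g_bounded z Hz) as [B1 B2].
  pose proof (Ht 0%nat ltac:(lia)); pose proof (Ht 1%nat ltac:(lia)).
  pose proof (Ht 2%nat ltac:(lia)); pose proof (Ht 3%nat ltac:(lia)).
  pose proof (Cmod_ge_0 (g1 z)); pose proof (Cmod_ge_0 (g2 z)).
  pose proof (Rabs_pos (t 2%nat)); pose proof (Rabs_pos (t 3%nat)).
  unfold disc_sum, disc_diff; split; (eapply Rle_trans; [apply Cmod_triangle |]);
    rewrite Cmod_mult, !Cmod_R; nra.
Qed.

Lemma C2norm_disc_family_le d t z : box 4 d t -> closed_disc z ->
  C2norm (disc_family t z) <= 2 * (1 + M) * d.
Proof.
  intros Ht Hz; destruct (Cmod_disc_coords_le d t z Ht Hz) as [B1 B2].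
  eapply Rle_trans; [apply C2norm_le |]; rewrite !Cnorm_Cmod; unfold disc_family; simpl.
  rewrite !Cmod_mult, Cmod_R, Rabs_right by lra.
  pose proof (Cmod_triangle (disc_sum t z) (disc_diff t z)).
  pose proof (Cmod_triangle (disc_sum t z) (- disc_diff t z)%C) as T.
  change (disc_sum t z + - disc_diff t z)%C with (disc_sum t z - disc_diff t z)%C in T.
  rewrite Cmod_opp in T; lra.
Qed.

Lemma C2dist_disc_family_le t t' z z' :
  C2dist (disc_family t' z') (disc_family t z) <=
  Cmod (disc_sum t' z' - disc_sum t z)%C + Cmod (disc_diff t' z' - disc_diff t z)%C.
Proof.
  unfold C2dist; eapply Rle_trans; [apply C2norm_le |]; simpl; rewrite !Cnorm_Cmod.
  change Csub with Cminus; unfold disc_family; simpl.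
  set (ds := (disc_sum t' z' - disc_sum t z)%C); set (dd := (disc_diff t' z' - disc_diff t z)%C).
  replace (RtoC (/ 2) * (disc_sum t' z' + disc_diff t' z')
           - RtoC (/ 2) * (disc_sum t z + disc_diff t z))%C
    with (RtoC (/ 2) * (ds + dd))%C by (unfold ds, dd; ring).
  replace (RtoC (/ 2) * (disc_sum t' z' - disc_diff t' z')
           - RtoC (/ 2) * (disc_sum t z - disc_diff t z))%C
    with (RtoC (/ 2) * (ds + - dd))%C by (unfold ds, dd; ring).
  rewrite !Cmod_mult, Cmod_R, Rabs_right by lra.
  pose proof (Cmod_triangle ds dd); pose proof (Cmod_triangle ds (- dd)%C).
  rewrite Cmod_opp in *; lra.
Qed.

Lemma Cmod_affine_dist (a a' b b' : R) (u u' : C) :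
  Cmod ((a' + b' * u') - (a + b * u))%C <=
  Rabs (a' - a) + Rabs (b' - b) * Cmod u' + Rabs b * Cmod (u' - u)%C.
Proof.
  replace ((a' + b' * u') - (a + b * u))%C
    with (RtoC (a' - a) + (RtoC (b' - b) * u' + RtoC b * (u' - u)))%C
    by (unfold RtoC, Cplus, Cminus, Cmult, Copp; simpl;
        apply injective_projections; simpl; ring).
  eapply Rle_trans; [apply Cmod_triangle |]; rewrite Cmod_R, Rplus_assoc.
  apply Rplus_le_compat_l; eapply Rle_trans; [apply Cmod_triangle |].
  rewrite !Cmod_mult, !Cmod_R; lra.
Qed.

Lemma disc_family_continuous d : 0 <= d -> family_continuous 4 (box 4 d) disc_family.
Proof.
  intros Hd t z Ht Hz eps He; pose proof bound_ge_1 as HM.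
  destruct (g_continuous z Hz) as [K1 K2].
  set (eta := eps / (4 * (d + 1))).
  assert (Heta : 0 < eta) by (unfold eta; apply Rdiv_lt_0_compat; lra).
  assert (d * eta <= eps / 4).
  { unfold eta; apply (Rmult_le_reg_r (4 * (d + 1))); [lra |].
    replace (d * (eps / (4 * (d + 1))) * (4 * (d + 1))) with (d * eps) by (field; lra); nra. }
  destruct (K1 eta Heta) as [d1 [Hd1 I1]]; destruct (K2 eta Heta) as [d2 [Hd2 I2]].
  pose proof (Rmin_l (Rmin d1 d2) (eps / (8 * (1 + M)))).
  pose proof (Rmin_r (Rmin d1 d2) (eps / (8 * (1 + M)))).
  pose proof (Rmin_l d1 d2); pose proof (Rmin_r d1 d2).
  set (a := Rmin (Rmin d1 d2) (eps / (8 * (1 + M)))) in *.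
  assert (Ha : 0 < a) by (repeat apply Rmin_pos; auto; apply Rdiv_lt_0_compat; lra).
  assert (Ma : (1 + M) * a <= eps / 8).
  { apply (Rmult_le_reg_l (/ (1 + M))); [apply Rinv_0_lt_compat; lra |].
    replace (/ (1 + M) * ((1 + M) * a)) with a by (field; lra).
    replace (/ (1 + M) * (eps / 8)) with (eps / (8 * (1 + M))) by (field; lra); lra. }
  exists a; split; [exact Ha |].
  intros t' z' Ht' Hz' Hdt Hdz; rewrite Cnorm_Cmod in Hdz; change Csub with Cminus in Hdz.
  specialize (I1 z' Hz' ltac:(lra)); specialize (I2 z' Hz' ltac:(lra)).
  destruct (g_bounded z' Hz') as [B1 B2].
  pose proof (Cmod_affine_dist (t 0%nat) (t' 0%nat) (t 2%nat) (t' 2%nat) (g1 z) (g1 z')).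
  pose proof (Cmod_affine_dist (t 1%nat) (t' 1%nat) (t 3%nat) (t' 3%nat) (g2 z) (g2 z')).
  assert (Hi : forall i, (i < 4)%nat -> Rabs (t' i - t i) <= a).
  { intros i Hi; pose proof (Rabs_sub_le_distRm 4 t' t i Hi); lra. }
  pose proof (Hi 0%nat ltac:(lia)); pose proof (Hi 1%nat ltac:(lia)).
  pose proof (Hi 2%nat ltac:(lia)); pose proof (Hi 3%nat ltac:(lia)).
  pose proof (Ht 2%nat ltac:(lia)); pose proof (Ht 3%nat ltac:(lia)).
  pose proof (Rabs_pos (t' 2%nat - t 2%nat)); pose proof (Rabs_pos (t' 3%nat - t 3%nat)).
  pose proof (Rabs_pos (t 2%nat)); pose proof (Rabs_pos (t 3%nat)).
  pose proof (Cmod_ge_0 (g1 z')); pose proof (Cmod_ge_0 (g2 z')).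
  pose proof (Cmod_ge_0 (g1 z' - g1 z)%C); pose proof (Cmod_ge_0 (g2 z' - g2 z)%C).
  eapply Rle_lt_trans; [apply C2dist_disc_family_le |]; unfold disc_sum, disc_diff.
  nra.
Qed.

Lemma disc_family_holomorphic d t : 0 <= d -> box 4 d t -> holomorphic_disc (disc_family t).
Proof.
  intros Hd Ht; split.
  - intros z Hz eps He.
    destruct (disc_family_continuous d Hd t z Ht Hz eps He) as [de [Hde H]].
    exists de; split; [exact Hde |]; intros z' Hz' Hzz.
    apply H; [exact Ht | exact Hz' | rewrite distRm_diag; exact Hde | exact Hzz].
  - intros z Hz; destruct (g_derivable z Hz) as [D1 D2].
    assert (Ds : Cderivable (disc_sum t) z) by now apply Cderivable_scal_add.
    assert (Dd : Cderivable (disc_diff t) z) by now apply Cderivable_scal_add.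
    split; apply Cderivable_C_differentiable_at.
    + apply Cderivable_mul; [apply Cderivable_const |]; now apply Cderivable_add.
    + apply Cderivable_ext with (fun u => RtoC (/ 2) * (disc_sum t u + -1 * disc_diff t u))%C.
      { intros u; simpl; ring. }
      apply Cderivable_mul; [apply Cderivable_const |]; apply Cderivable_add; [exact Ds |].
      apply Cderivable_mul; [apply Cderivable_const | exact Dd].
Qed.

End DiscFamily.

Theorem mainTheorem9 :
  (forall w : C2, Gamma (F w) <-> (Pi1 w \/ Pi2 w)) /\
  (forall U : C2 -> Prop, nbhd0 U ->
    exists V : C2 -> Prop,
      nbhd0 V /\ (forall w, V w -> U w) /\
      exists (m : nat) (P : (nat -> R) -> Prop) (Phi : (nat -> R) -> Cx -> C2) (t0 : nat -> R),
        family_continuous m P Phi /\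
        (forall t, P t -> holomorphic_disc (Phi t)) /\
        (forall t z, P t -> unit_circle z -> Pi1 (Phi t z) \/ Pi2 (Phi t z)) /\
        (forall w, V w <-> exists t z, P t /\ closed_disc z /\ Phi t z = w) /\
        P t0 /\ (forall z, closed_disc z -> Phi t0 z = C2zero) /\
        (forall t, P t -> path_in m P t t0)).
Proof.
  split; [exact preimage_Gamma_F |].
  intros U [r [Hr HU]].
  set (d := r / 30); assert (Hd : 0 < d) by (unfold d; lra).
  exists (fun w => exists t z, box 4 d t /\ closed_disc z /\ disc_family h1 h2 t z = w).
  split; [| split].
  - exists (d / 2); split; [lra |]; intros w Hw.
    exists (disc_param w), (RtoC 0); split; [now apply box_disc_param |]; split.
    + apply closed_disc_Cmod; rewrite Cmod_0; lra.
    + apply disc_family_param, h_at_0.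
  - intros w (t & z & Ht & Hz & <-); apply HU.
    pose proof (C2norm_disc_family_le h1 h2 12 Cmod_h_le d t z Ht Hz); unfold d in *; lra.
  - exists 4%nat, (box 4 d), (disc_family h1 h2), (fun _ => 0).
    split; [apply (disc_family_continuous h1 h2 12 Cmod_h_le continuous_in_h h_at_0); lra |].
    split; [intros t Ht; apply (disc_family_holomorphic h1 h2 12 Cmod_h_le continuous_in_h
                                Cderivable_h h_at_0 d); [lra | exact Ht] |].
    split; [intros t z _; apply disc_family_boundary, h_real_on_circle |].
    split; [intros w; reflexivity |].
    split; [intros i _; rewrite Rabs_R0; lra |].
    split; [intros z _; apply disc_family_zero |].
    intros t Ht; apply box_path_to_zero; [lra | exact Ht].
Qed.
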